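(* The pair $m=(\mathfrak L,\mathfrak R)$, where $\mathfrak L\colon\mathcal L_G\to\mathcal L_S$, $\mathfrak L(\overleftarrow e)=Se$, $\mathfrak L(r(e,u,f))=\rho(e,u,f)$, and $\mathfrak R\colon\mathcal R_G\to\mathcal R_S$, $\mathfrak R(\overrightarrow e)=eS$, $\mathfrak R(l(e,u,f))=\lambda(e,u,f)$, is an isomorphism of cross-connections from $(\mathcal R_G,\mathcal L_G;\Gamma_G)$ to $(\mathcal R_S,\mathcal L_S;\Gamma_S)$: $\mathfrak L$ and $\mathfrak R$ are isomorphisms of normal categories, and (M1) for every $(\overleftarrow e,\overrightarrow e)\in E_{\Gamma_G}$ one has $(\mathfrak L(\overleftarrow e),\mathfrak R(\overrightarrow e))=(Se,eS)\in E_{\Gamma_S}$ and $\mathfrak L(r^e(\overleftarrow g))=\rho^e(\mathfrak L(\overleftarrow g))$ for all $g\in E$; (M2) for $(\overleftarrow e,\overrightarrow e),(\overleftarrow f,\overrightarrow f)\in E_{\Gamma_G}$ and $u\in eSf$, $\mathfrak R$ maps the transpose of $r(e,u,f)$ to the transpose of $\mathfrak L(r(e,u,f))$.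
   Context: Let $S$ be a regular semigroup, $E=E(S)$. $\mathcal L_G$: objects $E/\mathscr L$ (classes $\overleftarrow e$); morphisms $\overleftarrow e\to\overleftarrow f$ the classes $r(e,u,f)$, $u\in eSf$, under $(e,u,f)\sim(g,v,h)$ iff $e\mathscr L g$, $f\mathscr L h$, $u=ev$; composition $r(e,u,f)r(f,v,g)=r(e,uv,g)$. $\mathcal R_G$: objects $E/\mathscr R$ (classes $\overrightarrow e$); morphisms $\overrightarrow e\to\overrightarrow f$ the classes $l(e,u,f)$, $u\in fSe$, under $(e,u,f)\sim(g,v,h)$ iff $e\mathscr R g$, $f\mathscr R h$, $u=ve$; composition $l(e,u,f)l(f,v,g)=l(e,vu,g)$. $\mathcal L_S$: objects $Se$, $e\in E$; morphisms $\rho(e,u,f)\colon Se\to Sf$, $t\mapsto tu$, $u\in eSf$. $\mathcal R_S$: objects $eS$; morphisms $\lambda(e,w,f)\colon eS\to fS$, $t\mapsto wt$, $w\in fSe$. Composition is left to right. $\Gamma_G\colon\mathcal R_G\to N^*\mathcal L_G$ is the cross-connection $\overrightarrow e\mapsto H(r^e;-)$, where $r^e(\overleftarrow g)=r(g,ge,e)$, and $\Gamma_S\colon\mathcal R_S\to N^*\mathcal L_S$ is Nambooripad's cross-connection $eS\mapsto H(\rho^e;-)$ of $S$, where $\rho^e(Sg)=\rho(g,ge,e)$. Their biordered sets are $E_{\Gamma_G}=\{(\overleftarrow e,\overrightarrow e):e\in E\}$ and $E_{\Gamma_S}=\{(Se,eS):e\in E\}$, with associated idempotent cones $\gamma(\overleftarrow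 e,\overrightarrow e)=r^e$ and $\gamma(Se,eS)=\rho^e$. Transposes: for $(\overleftarrow e,\overrightarrow e),(\overleftarrow f,\overrightarrow f)\in E_{\Gamma_G}$ the transpose of $r(e,u,f)$ is $l(f,u,e)\colon\overrightarrow f\to\overrightarrow e$, and for $(Se,eS),(Sf,fS)\in E_{\Gamma_S}$ the transpose of $\rho(e,u,f)$ is $\lambda(f,u,e)\colon fS\to eS$. A morphism of cross-connections $(\mathcal D,\mathcal C;\Gamma)\to(\mathcal D',\mathcal C';\Gamma')$ is a pair $(F,G)$ of inclusion-preserving functors $F\colon\mathcal C\to\mathcal C'$, $G\colon\mathcal D\to\mathcal D'$ with (M1) $(c,d)\in E_\Gamma\Rightarrow(F(c),G(d))\in E_{\Gamma'}$ and $F(\gamma(c,d)(c'))=\gamma(F(c),G(d))(F(c'))$ for all objects $c'$ of $\mathcal C$; (M2) if $(c,d),(c',d')\in E_\Gamma$ and $f^*\colon d'\to d$ is the transpose of $f\colon c\to c'$ then $G(f^* )=(F(f))^*$. An isomorphism of cross-connections is such a morphism whose components are isomorphisms of normal categories (inclusion-preserving isomorphisms of categories with inclusion-preserving inverses). *)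

Set Implicit Arguments.
Unset Strict Implicit.

Record Semigroup := {
  car :> Type;
  smul : car -> car -> car;
  smulA : forall a b c, smul (smul a b) c = smul a (smul b c)
}.

Arguments smul {s} _ _.

Definition regular (S : Semigroup) : Prop :=
  forall a : S, exists x : S, smul (smul a x) a = a.

Record Idem (S : Semigroup) := mkIdem { ival :> car S; idem : smul ival ival = ival }.
Arguments mkIdem {S} _ _.

Section Constructions.
Variable S : Semigroup.

(* Green's relations via principal one-sided ideals S^1 a, a S^1. *)
Definition inS1a (a x : S) : Prop := x = a \/ exists s : S, x = smul s a.
Definition inaS1 (a x : S) : Prop := x = a \/ exists s : S, x = smul a s.
Definition greenL (a b : S) : Prop := forall x, inS1a a x <-> inS1a b x.
Definition greenR (a b : S) : Prop := forall x, inaS1 a x <-> inaS1 b x.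

Definition inSe (e x : S) : Prop := exists s : S, x = smul s e.
Definition ineS (e x : S) : Prop := exists s : S, x = smul e s.

Definition in_eSf (e u f : S) : Prop := exists s : S, u = smul (smul e s) f.

Lemma in_eSf_comp (e f f' g : S) (u v : S) :
  in_eSf e u f -> in_eSf f' v g -> in_eSf e (smul u v) g.
Proof.
  intros [s Hs] [t Ht]. exists (smul (smul s f) (smul f' t)).
  subst u v. rewrite !smulA. reflexivity.
Qed.

Lemma in_eSf_id (e : Idem S) : in_eSf e e e.
Proof. exists (ival e). rewrite !idem. reflexivity. Qed.

Lemma in_eSf_cone (e g : Idem S) : in_eSf g (smul g e) e.
Proof. exists (ival g). rewrite idem. reflexivity. Qed.

End Constructions.

(* Categories presented by setoids of objects and morphisms, with a    *)
(* distinguished class of inclusions. Composition is left to right:    *)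
(* comp f g means "first f, then g".                                   *)

Record SCat := {
  Ob : Type;
  Mor : Type;
  ob_eq : Ob -> Ob -> Prop;
  mor_eq : Mor -> Mor -> Prop;
  dom : Mor -> Ob;
  cod : Mor -> Ob;
  comp : Mor -> Mor -> Mor;
  idm : Ob -> Mor;
  is_incl : Mor -> Prop
}.

Arguments ob_eq {s} _ _.
Arguments mor_eq {s} _ _.
Arguments dom {s} _.
Arguments cod {s} _.
Arguments comp {s} _ _.
Arguments idm {s} _.
Arguments is_incl {s} _.

Definition is_functor (C D : SCat) (Fo : Ob C -> Ob D) (Fm : Mor C -> Mor D) : Prop :=
  (forall a b, ob_eq a b -> ob_eq (Fo a) (Fo b)) /\
  (forall m n, mor_eq m n -> mor_eq (Fm m) (Fm n)) /\
  (forall m, ob_eq (dom (Fm m)) (Fo (dom m)) /\ ob_eq (cod (Fm m)) (Fo (cod m))) /\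
  (forall m n, ob_eq (cod m) (dom n) -> mor_eq (Fm (comp m n)) (comp (Fm m) (Fm n))) /\
  (forall a, mor_eq (Fm (idm a)) (idm (Fo a))).

Definition inclusion_preserving (C D : SCat) (Fm : Mor C -> Mor D) : Prop :=
  forall m, is_incl m -> is_incl (Fm m).

Definition normal_cat_iso (C D : SCat) (Fo : Ob C -> Ob D) (Fm : Mor C -> Mor D) : Prop :=
  is_functor Fo Fm /\ inclusion_preserving Fm /\
  exists (Go : Ob D -> Ob C) (Gm : Mor D -> Mor C),
    is_functor Go Gm /\ inclusion_preserving Gm /\
    (forall a, ob_eq (Go (Fo a)) a) /\ (forall b, ob_eq (Fo (Go b)) b) /\
    (forall m, mor_eq (Gm (Fm m)) m) /\ (forall n, mor_eq (Fm (Gm n)) n).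

(* Objects are represented by idempotents e (standing for the class    *)
(* <-e, ->e, or the set S e, e S respectively).                        *)

Section Cats.
Variable S : Semigroup.

Inductive LGMor := rmor (e : Idem S) (u : S) (f : Idem S) (H : in_eSf e u f).
Inductive RGMor := lmor (e : Idem S) (u : S) (f : Idem S) (H : in_eSf f u e).
(* rho(e,u,f) : S e -> S f, t |-> t u, u in e S f *)
Inductive LSMor := rho (e : Idem S) (u : S) (f : Idem S) (H : in_eSf e u f).
(* lambda(e,w,f) : e S -> f S, t |-> w t, w in f S e *)
Inductive RSMor := lam (e : Idem S) (w : S) (f : Idem S) (H : in_eSf f w e).
Arguments rmor : clear implicits.
Arguments lmor : clear implicits.
Arguments rho : clear implicits.
Arguments lam : clear implicits.

Definition LG_eq (m n : LGMor) : Prop :=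
  let (e, u, f, _) := m in let (g, v, h, _) := n in
  greenL e g /\ greenL f h /\ u = smul (ival e) v.
Definition RG_eq (m n : RGMor) : Prop :=
  let (e, u, f, _) := m in let (g, v, h, _) := n in
  greenR e g /\ greenR f h /\ u = smul v (ival e).

Definition LS_obeq (e g : Idem S) : Prop := forall x, inSe e x <-> inSe g x.
Definition RS_obeq (e g : Idem S) : Prop := forall x, ineS e x <-> ineS g x.

Definition LS_eq (m n : LSMor) : Prop :=
  let (e, u, f, _) := m in let (g, v, h, _) := n in
  LS_obeq e g /\ LS_obeq f h /\ (forall t, inSe e t -> smul t u = smul t v).
Definition RS_eq (m n : RSMor) : Prop :=
  let (e, w, f, _) := m in let (g, v, h, _) := n in
  RS_obeq e g /\ RS_obeq f h /\ (forall t, ineS e t -> smul w t = smul v t).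

Definition LG_comp (m n : LGMor) : LGMor :=
  let (e, u, f, H) := m in let (f', v, g, H') := n in
  rmor e (smul u v) g (in_eSf_comp H H').
Definition RG_comp (m n : RGMor) : RGMor :=
  let (e, u, f, H) := m in let (f', v, g, H') := n in
  lmor e (smul v u) g (in_eSf_comp H' H).
Definition LS_comp (m n : LSMor) : LSMor :=
  let (e, u, f, H) := m in let (f', v, g, H') := n in
  rho e (smul u v) g (in_eSf_comp H H').
Definition RS_comp (m n : RSMor) : RSMor :=
  let (e, w, f, H) := m in let (f', v, g, H') := n in
  lam e (smul v w) g (in_eSf_comp H' H).

(* Inclusions.  In L_G: the morphisms r(e,e,f) with e = e f (i.e. S e ⊆ S f);
   in R_G: l(e,e,f) with e = f e (i.e. e S ⊆ f S); in L_S and R_S: the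
   set-theoretic inclusion maps S e ⊆ S f, e S ⊆ f S. *)
Definition LG_incl (m : LGMor) : Prop :=
  exists m', LG_eq m m' /\
    (let (e, u, f, _) := m' in u = ival e /\ ival e = smul (ival e) (ival f)).
Definition RG_incl (m : RGMor) : Prop :=
  exists m', RG_eq m m' /\
    (let (e, u, f, _) := m' in u = ival e /\ ival e = smul (ival f) (ival e)).
Definition LS_incl (m : LSMor) : Prop :=
  let (e, u, f, _) := m in
  (forall x, inSe e x -> inSe f x) /\ (forall t, inSe e t -> smul t u = t).
Definition RS_incl (m : RSMor) : Prop :=
  let (e, w, f, _) := m in
  (forall x, ineS e x -> ineS f x) /\ (forall t, ineS e t -> smul w t = t).

Definition LG : SCat := {|
  Ob := Idem S; Mor := LGMor; ob_eq := fun e g => greenL e g; mor_eq := LG_eq;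
  dom := fun m => let (e, _, _, _) := m in e;
  cod := fun m => let (_, _, f, _) := m in f;
  comp := LG_comp; idm := fun e => rmor e e e (in_eSf_id e); is_incl := LG_incl |}.

Definition RG : SCat := {|
  Ob := Idem S; Mor := RGMor; ob_eq := fun e g => greenR e g; mor_eq := RG_eq;
  dom := fun m => let (e, _, _, _) := m in e;
  cod := fun m => let (_, _, f, _) := m in f;
  comp := RG_comp; idm := fun e => lmor e e e (in_eSf_id e); is_incl := RG_incl |}.

Definition LS : SCat := {|
  Ob := Idem S; Mor := LSMor; ob_eq := LS_obeq; mor_eq := LS_eq;
  dom := fun m => let (e, _, _, _) := m in e;
  cod := fun m => let (_, _, f, _) := m in f;
  comp := LS_comp; idm := fun e => rho e e e (in_eSf_id e); is_incl := LS_incl |}.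

Definition RS : SCat := {|
  Ob := Idem S; Mor := RSMor; ob_eq := RS_obeq; mor_eq := RS_eq;
  dom := fun m => let (e, _, _, _) := m in e;
  cod := fun m => let (_, _, f, _) := m in f;
  comp := RS_comp; idm := fun e => lam e e e (in_eSf_id e); is_incl := RS_incl |}.

Definition fL_ob (e : Ob LG) : Ob LS := e.
Definition fL_mor (m : Mor LG) : Mor LS :=
  let (e, u, f, H) := m in rho e u f H.
Definition fR_ob (e : Ob RG) : Ob RS := e.
Definition fR_mor (m : Mor RG) : Mor RS :=
  let (e, u, f, H) := m in lam e u f H.

Definition E_GammaG (a : Ob LG) (b : Ob RG) : Prop :=
  exists e : Idem S, @ob_eq LG a e /\ @ob_eq RG b e.
Definition E_GammaS (a : Ob LS) (b : Ob RS) : Prop :=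
  exists e : Idem S, @ob_eq LS a e /\ @ob_eq RS b e.

Definition r_cone (e : Idem S) (g : Ob LG) : Mor LG := rmor g (smul g e) e (in_eSf_cone e g).
Definition rho_cone (e : Idem S) (g : Ob LS) : Mor LS := rho g (smul g e) e (in_eSf_cone e g).

(* Transposes, relative to the idempotents (e, f) carried by the morphism:
   r(e,u,f)^* = l(f,u,e), rho(e,u,f)^* = lambda(f,u,e). *)
Definition transposeG (m : Mor LG) : Mor RG := let (e, u, f, H) := m in lmor f u e H.
Definition transposeS (m : Mor LS) : Mor RS := let (e, u, f, H) := m in lam f u e H.

End Cats.
Arguments rmor {S} e u f H.
Arguments lmor {S} e u f H.
Arguments rho {S} e u f H.
Arguments lam {S} e w f H.

(* Both functors are the identity on the idempotents representing the objects
   and on the triples representing the morphisms, so the content lies in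
   matching the equalities and inclusions of the two presentations.  For an
   idempotent [e] one has [S^1 e = S e], so [e L g] iff [S e = S g]; and for
   [u] in [e S f] the map [t |-> t u] on [S e] is determined by [e u = u],
   which is exactly the normal form used in [L_G].  Cones and transposes are
   then mapped to cones and transposes on the nose; the right-hand side is the
   mirror image. *)
From Stdlib Require Import Setoid.

Section IsoOfStrictBijection.
Variables C D : SCat.
Variables (Fo : Ob C -> Ob D) (Fm : Mor C -> Mor D).
Variables (Go : Ob D -> Ob C) (Gm : Mor D -> Mor C).

Hypothesis FoK : forall a, Go (Fo a) = a.
Hypothesis GoK : forall b, Fo (Go b) = b.
Hypothesis FmK : forall m, Gm (Fm m) = m.
Hypothesis GmK : forall n, Fm (Gm n) = n.

Hypothesis ob_eq_D_refl : forall b : Ob D, ob_eq b b.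
Hypothesis mor_eq_D_refl : forall n : Mor D, mor_eq n n.

Hypothesis ob_eq_Fo : forall a b, ob_eq (Fo a) (Fo b) <-> ob_eq a b.
Hypothesis mor_eq_Fm : forall m n, mor_eq (Fm m) (Fm n) <-> mor_eq m n.
Hypothesis is_incl_Fm : forall m, is_incl (Fm m) <-> is_incl m.

Hypothesis dom_Fm : forall m, dom (Fm m) = Fo (dom m).
Hypothesis cod_Fm : forall m, cod (Fm m) = Fo (cod m).
Hypothesis comp_Fm : forall m n, Fm (comp m n) = comp (Fm m) (Fm n).
Hypothesis idm_Fm : forall a, Fm (idm a) = idm (Fo a).

Let ob_eq_C_refl (a : Ob C) : ob_eq a a.
Proof. apply ob_eq_Fo, ob_eq_D_refl. Qed.

Let mor_eq_C_refl (m : Mor C) : mor_eq m m.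
Proof. apply mor_eq_Fm, mor_eq_D_refl. Qed.

Lemma normal_cat_iso_of_strict_bijection : normal_cat_iso Fo Fm.
Proof.
  split; [|split].
  - repeat split; intros.
    + now apply ob_eq_Fo.
    + now apply mor_eq_Fm.
    + rewrite dom_Fm; apply ob_eq_D_refl.
    + rewrite cod_Fm; apply ob_eq_D_refl.
    + rewrite comp_Fm; apply mor_eq_D_refl.
    + rewrite idm_Fm; apply mor_eq_D_refl.
  - intros m; apply is_incl_Fm.
  - exists Go, Gm; split; [|split; [|repeat split]].
    + repeat split; intros.
      * apply ob_eq_Fo; now rewrite !GoK.
      * apply mor_eq_Fm; now rewrite !GmK.
      * rewrite <- (FoK (dom (Gm m))), <- dom_Fm, GmK; apply ob_eq_C_refl.
      * rewrite <- (FoK (cod (Gm m))), <- cod_Fm, GmK; apply ob_eq_C_refl.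
      * rewrite <- (FmK (comp (Gm m) (Gm n))), comp_Fm, !GmK.
        apply mor_eq_C_refl.
      * rewrite <- (FmK (idm (Go a))), idm_Fm, !GoK; apply mor_eq_C_refl.
    + intros n; rewrite <- is_incl_Fm, GmK; auto.
    + intros a; rewrite FoK; apply ob_eq_C_refl.
    + intros b; rewrite GoK; apply ob_eq_D_refl.
    + intros m; rewrite FmK; apply mor_eq_C_refl.
    + intros n; rewrite GmK; apply mor_eq_D_refl.
Qed.

End IsoOfStrictBijection.

Section LeftCategories.
Variable S : Semigroup.

Lemma Se_fix {e : Idem S} {t} : inSe e t -> smul t e = t.
Proof. intros [s ->]. now rewrite smulA, idem. Qed.

Lemma eSf_lfix {e f : Idem S} {u} : in_eSf e u f -> smul e u = u.
Proof. intros [s ->]. now rewrite <- !smulA, idem. Qed.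

Lemma inS1a_Se (e : Idem S) x : inS1a e x <-> inSe e x.
Proof.
  split.
  - intros [->|Hx]; [exists (ival e); now rewrite idem | exact Hx].
  - now right.
Qed.

Lemma greenL_LS_obeq (e g : Idem S) : greenL e g <-> LS_obeq e g.
Proof. split; intros H x; specialize (H x); now rewrite !inS1a_Se in *. Qed.

Lemma Se_sub_iff (e f : Idem S) :
  (forall x, inSe e x -> inSe f x) <-> smul e f = e.
Proof.
  split.
  - intros Hsub. apply Se_fix, Hsub. exists (ival e); now rewrite idem.
  - intros Hef x [s ->]. exists (smul s e). now rewrite smulA, Hef.
Qed.

Lemma agree_on_Se_iff {e f : Idem S} {u} v : in_eSf e u f ->
  (forall t, inSe e t -> smul t u = smul t v) <-> u = smul e v.
Proof.
  intros Hu; split.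
  - intros Hagree. rewrite <- (eSf_lfix Hu). apply Hagree.
    exists (ival e); now rewrite idem.
  - intros -> t Ht. now rewrite <- smulA, Se_fix.
Qed.

Lemma LS_eq_refl (m : LSMor S) : LS_eq m m.
Proof. destruct m; simpl; firstorder. Qed.

Lemma LS_eq_fL_mor (m n : LGMor S) : LS_eq (fL_mor m) (fL_mor n) <-> LG_eq m n.
Proof.
  destruct m as [e u f Hu], n as [g v h Hv]; simpl.
  now rewrite !greenL_LS_obeq, (agree_on_Se_iff v Hu).
Qed.

Lemma LS_incl_fL_mor (m : LGMor S) : LS_incl (fL_mor m) <-> LG_incl m.
Proof.
  destruct m as [e u f Hu]; simpl; split.
  - intros [Hsub Hfix]. apply Se_sub_iff in Hsub.
    assert (Hee : in_eSf e e f) by (exists (ival e); now rewrite idem, Hsub).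
    exists (rmor e e f Hee); simpl.
    rewrite !greenL_LS_obeq, idem.
    split; [split; [intro; tauto | split; [intro; tauto |]] | now split].
    rewrite <- (eSf_lfix Hu). apply Hfix. exists (ival e); now rewrite idem.
  - intros [[e' u' f' Hu'] [[Hee' [Hff' ->]] [-> Hincl]]].
    apply greenL_LS_obeq in Hee', Hff'. split.
    + intros x Hx. apply Hff', Se_sub_iff with e'; [now symmetry | now apply Hee'].
    + intros t Ht. rewrite <- smulA, (Se_fix Ht).
      apply Se_fix, Hee', Ht.
Qed.

Definition fL_inv_ob (e : Ob (LS S)) : Ob (LG S) := e.
Definition fL_inv_mor (m : Mor (LS S)) : Mor (LG S) :=
  let (e, u, f, H) := m in rmor e u f H.

Lemma fL_iso : normal_cat_iso (@fL_ob S) (@fL_mor S).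
Proof.
  apply normal_cat_iso_of_strict_bijection with fL_inv_ob fL_inv_mor;
    try (intros []; reflexivity); try (intros [] []; reflexivity).
  - intros e x; tauto.
  - exact LS_eq_refl.
  - intros e g; symmetry; apply greenL_LS_obeq.
  - exact LS_eq_fL_mor.
  - exact LS_incl_fL_mor.
Qed.

End LeftCategories.

Section RightCategories.
Variable S : Semigroup.

Lemma eS_fix {e : Idem S} {t} : ineS e t -> smul e t = t.
Proof. intros [s ->]. now rewrite <- smulA, idem. Qed.

Lemma eSf_rfix {e f : Idem S} {u} : in_eSf e u f -> smul u f = u.
Proof. intros [s ->]. now rewrite !smulA, idem. Qed.

Lemma inaS1_eS (e : Idem S) x : inaS1 e x <-> ineS e x.
Proof.
  split.
  - intros [->|Hx]; [exists (ival e); now rewrite idem | exact Hx].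
  - now right.
Qed.

Lemma greenR_RS_obeq (e g : Idem S) : greenR e g <-> RS_obeq e g.
Proof. split; intros H x; specialize (H x); now rewrite !inaS1_eS in *. Qed.

Lemma eS_sub_iff (e f : Idem S) :
  (forall x, ineS e x -> ineS f x) <-> smul f e = e.
Proof.
  split.
  - intros Hsub. apply eS_fix, Hsub. exists (ival e); now rewrite idem.
  - intros Hfe x [s ->]. exists (smul e s). now rewrite <- smulA, Hfe.
Qed.

Lemma agree_on_eS_iff {e f : Idem S} {w} v : in_eSf f w e ->
  (forall t, ineS e t -> smul w t = smul v t) <-> w = smul v e.
Proof.
  intros Hw; split.
  - intros Hagree. rewrite <- (eSf_rfix Hw). apply Hagree.
    exists (ival e); now rewrite idem.
  - intros -> t Ht. now rewrite smulA, eS_fix.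
Qed.

Lemma RS_eq_refl (m : RSMor S) : RS_eq m m.
Proof. destruct m; simpl; firstorder. Qed.

Lemma RS_eq_fR_mor (m n : RGMor S) : RS_eq (fR_mor m) (fR_mor n) <-> RG_eq m n.
Proof.
  destruct m as [e u f Hu], n as [g v h Hv]; simpl.
  now rewrite !greenR_RS_obeq, (agree_on_eS_iff v Hu).
Qed.

Lemma RS_incl_fR_mor (m : RGMor S) : RS_incl (fR_mor m) <-> RG_incl m.
Proof.
  destruct m as [e u f Hu]; simpl; split.
  - intros [Hsub Hfix]. apply eS_sub_iff in Hsub.
    assert (Hee : in_eSf f e e) by (exists (ival e); now rewrite smulA, !idem, Hsub).
    exists (lmor e e f Hee); simpl.
    rewrite !greenR_RS_obeq, idem.
    split; [split; [intro; tauto | split; [intro; tauto |]] | now split].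
    rewrite <- (eSf_rfix Hu). apply Hfix. exists (ival e); now rewrite idem.
  - intros [[e' u' f' Hu'] [[Hee' [Hff' ->]] [-> Hincl]]].
    apply greenR_RS_obeq in Hee', Hff'. split.
    + intros x Hx. apply Hff', eS_sub_iff with e'; [now symmetry | now apply Hee'].
    + intros t Ht. rewrite smulA, (eS_fix Ht).
      apply eS_fix, Hee', Ht.
Qed.

Definition fR_inv_ob (e : Ob (RS S)) : Ob (RG S) := e.
Definition fR_inv_mor (m : Mor (RS S)) : Mor (RG S) :=
  let (e, w, f, H) := m in lmor e w f H.

Lemma fR_iso : normal_cat_iso (@fR_ob S) (@fR_mor S).
Proof.
  apply normal_cat_iso_of_strict_bijection with fR_inv_ob fR_inv_mor;
    try (intros []; reflexivity); try (intros [] []; reflexivity).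
  - intros e x; tauto.
  - exact RS_eq_refl.
  - intros e g; symmetry; apply greenR_RS_obeq.
  - exact RS_eq_fR_mor.
  - exact RS_incl_fR_mor.
Qed.

End RightCategories.

Theorem mainTheorem19 (S : Semigroup) (Hreg : regular S) :
  normal_cat_iso (@fL_ob S) (@fL_mor S) /\
  normal_cat_iso (@fR_ob S) (@fR_mor S) /\
  (forall e : Idem S,
     E_GammaG (S := S) e e ->
     E_GammaS (fL_ob e) (fR_ob e) /\
     (forall g : Idem S, @mor_eq (LS S) (fL_mor (r_cone e g)) (rho_cone e (fL_ob g)))) /\
  (forall (e f : Idem S) (u : S) (H : in_eSf e u f),
     E_GammaG (S := S) e e -> E_GammaG (S := S) f f ->
     @mor_eq (RS S) (fR_mor (transposeG (rmor e u f H))) (transposeS (fL_mor (rmor e u f H)))).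
Proof.
  split; [apply fL_iso | split; [apply fR_iso | split]].
  - intros e _. split.
    + exists e; split; intro; tauto.
    + intros g. apply LS_eq_refl.
  - intros e f u H _ _. apply RS_eq_refl.
Qed.
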